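(* Let $l:\mathbb{R}^n\times\mathbb{R}^m\times\mathbb{R}^d\to\mathbb{R}$ be $\ell_1$-smooth and $L_1$-Lipschitz continuous, let $\mathcal{Y}\subset\mathbb{R}^m$ be nonempty, closed, convex and bounded, and let $l(x,\cdot,z)$ be $\mu$-strongly concave on $\mathcal{Y}$ for every $(x,z)$. Fix an iteration $k$ with center $\widehat x^k\in\mathbb{R}^n$, radius $\delta_k\in(0,\delta_{\max}]$, an affine model with $\|\widehat B^{k,1}\|_F\le B$, and define $\mathcal{L}^k$, $\Phi^k$, $y^{k,*}$, $\widehat L_1=L_1(1+B)$, $\widehat\ell_1=\ell_1(1+B)^2$ as in the context. Let $y^{i,*}:\mathcal{B}(\widehat x^k,\delta_k)\to\mathcal{Y}$ be any map and put $g_k=\nabla_x\mathcal{L}^k(\widehat x^k,y^{i,*}(\widehat x^k))$. Assume $g_k\neq0$, $\nabla\Phi^k(\widehat x^k)\neq 0$, and that for some $\tilde\kappa_{dcp}>0$, $$\Phi^k(\widehat x^k)-\Phi^k(\widehat x^k+\tilde s^k)\ge\tilde\kappa_{dcp}\|\nabla\Phi^k(\widehat x^k)\|\min\{\delta_k,1\},\qquad \tilde s^k=-\delta_k\frac{\nabla\Phi^k(\widehat x^k)}{\|\nabla\Phi^k(\widehat x^k)\|}.$$ Suppose further that $\|y^{i,*}(x)-y^{k,*}(x)\|\le\epsilon$ for all $x\in\mathcal{B}(\widehat x^k,\delta_k)$, where $$\epsilon\le\min\Big\{\frac{\|g_k\|}{2\widehat\ell_1},\ \frac{\|\nabla\Phi^k(\widehat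 x^k)\|\,\|g_k\|\,\tilde\kappa_{dcp}}{8\widehat L_1\widehat\ell_1\max\{\delta_{\max},1\}},\ \frac{\|g_k\|\min\{\delta_k,1\}\tilde\kappa_{dcp}}{16\widehat L_1}\Big\}.$$ Then, with $s^k=-\delta_k g_k/\|g_k\|$ and $\kappa_{dcp}=\tilde\kappa_{dcp}/8$, $$\mathcal{L}^k(\widehat x^k,y^{i,*}(\widehat x^k))-\mathcal{L}^k(\widehat x^k+s^k,y^{i,*}(\widehat x^k+s^k))\ge\kappa_{dcp}\|g_k\|\min\{\delta_k,1\}.$$
   Context: Notation: $\mathcal{B}(x,\delta)=\{z:\|z-x\|\le\delta\}$. Given data points $x^1,\dots,x^{N_k}$ and observations $\omega^1,\dots,\omega^{N_k}\in\mathbb{R}^d$, affine coefficients $\widehat B^{k,1}\in\mathbb{R}^{n\times d}$, $\widehat B^{k,0}\in\mathbb{R}^{1\times d}$ (the least-squares fit of $\omega^i$ on $x^i$) and residuals $e^{k,i}=\omega^i-(\widehat B^{k,1})^\top x^i-(\widehat B^{k,0})^\top$, the local model is $m_k(x,e)=(\widehat B^{k,1})^\top x+(\widehat B^{k,0})^\top+e$, and $\mathcal{L}^k(x,y)=\frac1{N_k}\sum_{i=1}^{N_k}l(x,y,m_k(x,e^{k,i}))$, $\Phi^k(x)=\max_{y\in\mathcal{Y}}\mathcal{L}^k(x,y)$, $y^{k,*}(x)=\arg\max_{y\in\mathcal{Y}}\mathcal{L}^k(x,y)$ (unique by strong concavity). $\ell$-smooth means differentiable with $\ell$-Lipschitz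 gradient. *)

From mathcomp Require Import all_boot all_order all_algebra.
From mathcomp Require Import reals.
Set Implicit Arguments. Unset Strict Implicit. Unset Printing Implicit Defensive.
Import Order.TTheory GRing.Theory Num.Theory.
Local Open Scope ring_scope.

Section Defs.
Variable R : realType.

Definition dotv k (u v : 'rV[R]_k) : R := \sum_(i < k) u 0 i * v 0 i.
Definition enorm k (v : 'rV[R]_k) : R := Num.sqrt (dotv v v).
Definition frob p q (A : 'M[R]_(p, q)) : R :=
  Num.sqrt (\sum_(i < p) \sum_(j < q) A i j ^+ 2).
Definition tnorm n m d (x : 'rV[R]_n) (y : 'rV[R]_m) (z : 'rV[R]_d) : R :=
  Num.sqrt (dotv x x + dotv y y + dotv z z).

Definition eball n (x : 'rV[R]_n) (delta : R) (z : 'rV[R]_n) : Prop :=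
  enorm (z - x) <= delta.

Definition has_grad n (f : 'rV[R]_n -> R) (x g : 'rV[R]_n) : Prop :=
  forall eps : R, 0 < eps -> exists2 del : R, 0 < del &
    forall h : 'rV[R]_n, enorm h <= del ->
      `|f (x + h) - f x - dotv g h| <= eps * enorm h.

Definition has_grad3 n m d (f : 'rV[R]_n -> 'rV[R]_m -> 'rV[R]_d -> R)
    x y z (gx : 'rV[R]_n) (gy : 'rV[R]_m) (gz : 'rV[R]_d) : Prop :=
  forall eps : R, 0 < eps -> exists2 del : R, 0 < del &
    forall hx hy hz, tnorm hx hy hz <= del ->
      `|f (x + hx) (y + hy) (z + hz) - f x y z
         - (dotv gx hx + dotv gy hy + dotv gz hz)| <= eps * tnorm hx hy hz.

Definition smooth3 n m d (ell : R) (f : 'rV[R]_n -> 'rV[R]_m -> 'rV[R]_d -> R)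
  : Prop :=
  exists Gx : 'rV[R]_n -> 'rV[R]_m -> 'rV[R]_d -> 'rV[R]_n,
  exists Gy : 'rV[R]_n -> 'rV[R]_m -> 'rV[R]_d -> 'rV[R]_m,
  exists Gz : 'rV[R]_n -> 'rV[R]_m -> 'rV[R]_d -> 'rV[R]_d,
    (forall x y z, has_grad3 f x y z (Gx x y z) (Gy x y z) (Gz x y z)) /\
    (forall x y z x' y' z',
       tnorm (Gx x y z - Gx x' y' z') (Gy x y z - Gy x' y' z')
             (Gz x y z - Gz x' y' z')
       <= ell * tnorm (x - x') (y - y') (z - z')).

Definition lipschitz3 n m d (L : R) (f : 'rV[R]_n -> 'rV[R]_m -> 'rV[R]_d -> R)
  : Prop :=
  forall x y z x' y' z',
    `|f x y z - f x' y' z'| <= L * tnorm (x - x') (y - y') (z - z').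

Definition convex_set m (Y : 'rV[R]_m -> Prop) : Prop :=
  forall y1 y2 (t : R), Y y1 -> Y y2 -> 0 <= t -> t <= 1 ->
    Y (t *: y1 + (1 - t) *: y2).
Definition closed_set m (Y : 'rV[R]_m -> Prop) : Prop :=
  forall y, (forall eps : R, 0 < eps -> exists2 y', Y y' & enorm (y - y') < eps)
    -> Y y.
Definition bounded_set m (Y : 'rV[R]_m -> Prop) : Prop :=
  exists M : R, forall y, Y y -> enorm y <= M.
Definition nonempty_set m (Y : 'rV[R]_m -> Prop) : Prop := exists y, Y y.

Definition strongly_concave_on m (mu : R) (Y : 'rV[R]_m -> Prop)
  (g : 'rV[R]_m -> R) : Prop :=
  forall y1 y2 (t : R), Y y1 -> Y y2 -> 0 <= t -> t <= 1 ->
    t * g y1 + (1 - t) * g y2 + mu / 2 * t * (1 - t) * enorm (y1 - y2) ^+ 2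
      <= g (t *: y1 + (1 - t) *: y2).

(* residuals e^{k,i} = omega^i - (B1)^T x^i - (B0)^T, in row-vector form *)
Definition resid n d N (X : 'I_N -> 'rV[R]_n) (W : 'I_N -> 'rV[R]_d)
  (B1 : 'M[R]_(n, d)) (B0 : 'rV[R]_d) (i : 'I_N) : 'rV[R]_d :=
  W i - X i *m B1 - B0.

Definition least_squares_fit n d N (X : 'I_N -> 'rV[R]_n) (W : 'I_N -> 'rV[R]_d)
  (B1 : 'M[R]_(n, d)) (B0 : 'rV[R]_d) : Prop :=
  forall (C1 : 'M[R]_(n, d)) (C0 : 'rV[R]_d),
    \sum_(i < N) enorm (resid X W B1 B0 i) ^+ 2
      <= \sum_(i < N) enorm (resid X W C1 C0 i) ^+ 2.

Definition mk n d (B1 : 'M[R]_(n, d)) (B0 : 'rV[R]_d) (x : 'rV[R]_n)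
  (e : 'rV[R]_d) : 'rV[R]_d := x *m B1 + B0 + e.

Definition Lk n m d N (l : 'rV[R]_n -> 'rV[R]_m -> 'rV[R]_d -> R)
  (X : 'I_N -> 'rV[R]_n) (W : 'I_N -> 'rV[R]_d)
  (B1 : 'M[R]_(n, d)) (B0 : 'rV[R]_d) (x : 'rV[R]_n) (y : 'rV[R]_m) : R :=
  (N%:R)^-1 * \sum_(i < N) l x y (mk B1 B0 x (resid X W B1 B0 i)).

End Defs.

From mathcomp Require Import all_boot all_order all_algebra.
From mathcomp Require Import reals.
From mathcomp Require Import ring lra.
Import Order.TTheory GRing.Theory Num.Theory.
Local Open Scope ring_scope.

(* The x-gradient of L^k(., y) is (l1 (1 + B))-Lipschitz in y, and at
   y = y^{k,*}(xhat) it is the gradient of Phi^k, because Phi^k touches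
   L^k(., y^{k,*}(xhat)) from above at xhat.  Hence g_k is within
   l1 (1 + B)^2 eps of grad Phi^k(xhat), and the normalized steps s^k and
   s~^k differ by at most 2 delta l1 (1 + B)^2 eps / |grad Phi^k(xhat)|.
   Comparing with Phi^k, which is L1 (1 + B)-Lipschitz,
     L^k(xhat, y^i(xhat)) >= Phi^k(xhat) - L1 eps,
     L^k(xhat + s^k, y^i(xhat + s^k)) <= Phi^k(xhat + s~^k) + L1 (1 + B) |s^k - s~^k|.
   The decrease of Phi^k along s~^k is at least kappa~ |g_k| min(delta, 1) / 2
   (as |grad Phi^k(xhat)| >= |g_k| / 2), and the bounds on eps keep the errors
   below 5/16 kappa~ |g_k| min(delta, 1). *)

Set Implicit Arguments. Unset Strict Implicit.

Section EuclideanNorm.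
Variable R : realType.
Implicit Types (a : R) (k : nat).

Lemma sqrtr_le (x y : R) : 0 <= y -> x <= y ^+ 2 -> Num.sqrt x <= y.
Proof.
by move=> y0 /ler_wsqrtr /le_trans; apply; rewrite sqrtr_sqr ger0_norm.
Qed.

Lemma dotvC k (u v : 'rV[R]_k) : dotv u v = dotv v u.
Proof. by apply: eq_bigr => i _; rewrite mulrC. Qed.

Lemma dotvDl k (u v w : 'rV[R]_k) : dotv (u + v) w = dotv u w + dotv v w.
Proof. by rewrite /dotv -big_split; apply: eq_bigr => i _; rewrite !mxE mulrDl. Qed.

Lemma dotvZl k a (u w : 'rV[R]_k) : dotv (a *: u) w = a * dotv u w.
Proof. by rewrite /dotv mulr_sumr; apply: eq_bigr => i _; rewrite !mxE mulrA. Qed.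

Lemma dotvNl k (u w : 'rV[R]_k) : dotv (- u) w = - dotv u w.
Proof. by rewrite -scaleN1r dotvZl mulN1r. Qed.

Lemma dotv0l k (w : 'rV[R]_k) : dotv 0 w = 0.
Proof. by rewrite -(scale0r 0) dotvZl mul0r. Qed.

Lemma dotvDr k (u v w : 'rV[R]_k) : dotv w (u + v) = dotv w u + dotv w v.
Proof. by rewrite dotvC dotvDl !(dotvC w). Qed.

Lemma dotvZr k a (u w : 'rV[R]_k) : dotv w (a *: u) = a * dotv w u.
Proof. by rewrite dotvC dotvZl dotvC. Qed.

Lemma dotvNr k (u w : 'rV[R]_k) : dotv w (- u) = - dotv w u.
Proof. by rewrite dotvC dotvNl dotvC. Qed.

Lemma dotv0r k (w : 'rV[R]_k) : dotv w 0 = 0.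
Proof. by rewrite dotvC dotv0l. Qed.

Lemma dotv_mulmx k (u w : 'rV[R]_k) : dotv u w = (u *m w^T) 0 0.
Proof. by rewrite mxE; apply: eq_bigr => i _; rewrite mxE. Qed.

Lemma dotv_mulmx_tr k p (u : 'rV[R]_p) (A : 'M[R]_(k, p)) (h : 'rV[R]_k) :
  dotv (u *m A^T) h = dotv u (h *m A).
Proof. by rewrite !dotv_mulmx trmx_mul mulmxA. Qed.

Lemma dotv_ge0 k (u : 'rV[R]_k) : 0 <= dotv u u.
Proof. by apply: sumr_ge0 => i _; rewrite -expr2 sqr_ge0. Qed.

Lemma enorm_ge0 k (u : 'rV[R]_k) : 0 <= enorm u.
Proof. exact: sqrtr_ge0. Qed.

Lemma enorm_sqr k (u : 'rV[R]_k) : enorm u ^+ 2 = dotv u u.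
Proof. by rewrite sqr_sqrtr // dotv_ge0. Qed.

Lemma enorm0 k : enorm (0 : 'rV[R]_k) = 0.
Proof. by rewrite /enorm dotv0l sqrtr0. Qed.

Lemma enorm_eq0 k (u : 'rV[R]_k) : (enorm u == 0) = (u == 0).
Proof.
apply/idP/eqP => [|->]; last by rewrite enorm0.
rewrite sqrtr_eq0 le_eqVlt ltNge dotv_ge0 orbF psumr_eq0 => [/allP u0|i _].
  apply/rowP => j; apply/eqP; rewrite mxE -sqrf_eq0 expr2.
  exact: implyP (u0 j (mem_index_enum _)) isT.
by rewrite -expr2 sqr_ge0.
Qed.

Lemma enorm_gt0 k (u : 'rV[R]_k) : u != 0 -> 0 < enorm u.
Proof. by rewrite lt_neqAle enorm_ge0 andbT (eq_sym 0) enorm_eq0. Qed.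

Lemma enormZ k a (u : 'rV[R]_k) : enorm (a *: u) = `|a| * enorm u.
Proof.
by rewrite /enorm dotvZl dotvZr mulrA -expr2 sqrtrM ?sqr_ge0 // sqrtr_sqr.
Qed.

Lemma enormN k (u : 'rV[R]_k) : enorm (- u) = enorm u.
Proof. by rewrite -scaleN1r enormZ normrN1 mul1r. Qed.

Lemma enormB k (u v : 'rV[R]_k) : enorm (u - v) = enorm (v - u).
Proof. by rewrite -enormN opprB. Qed.

Lemma cauchy_schwarz k (u v : 'rV[R]_k) : dotv u v <= enorm u * enorm v.
Proof.
have [->|/enorm_gt0 pu] := eqVneq u 0; first by rewrite dotv0l enorm0 mul0r.
have [->|/enorm_gt0 qv] := eqVneq v 0; first by rewrite dotv0r enorm0 mulr0.
have := dotv_ge0 (enorm v *: u - enorm u *: v).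
rewrite !(dotvDl, dotvDr, dotvNl, dotvNr, dotvZl, dotvZr) -!enorm_sqr.
rewrite (dotvC v u); have := mulr_gt0 pu qv; nra.
Qed.

Lemma normr_dotv k (u v : 'rV[R]_k) : `|dotv u v| <= enorm u * enorm v.
Proof.
rewrite ler_norml cauchy_schwarz andbT lerNl -dotvNl.
by rewrite -(enormN u) cauchy_schwarz.
Qed.

Lemma enormD k (u v : 'rV[R]_k) : enorm (u + v) <= enorm u + enorm v.
Proof.
apply: sqrtr_le; first by rewrite addr_ge0 ?enorm_ge0.
rewrite !(dotvDl, dotvDr) (dotvC v u) -!enorm_sqr.
have := cauchy_schwarz u v; nra.
Qed.

Lemma lerB_enorm k (u v : 'rV[R]_k) : `|enorm u - enorm v| <= enorm (u - v).
Proof.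
rewrite ler_norml; apply/andP; split.
  by have := enormD (v - u) u; rewrite subrK enormB; lra.
by have := enormD (u - v) v; rewrite subrK; lra.
Qed.

Lemma enorm_sum I (s : seq I) k (F : I -> 'rV[R]_k) :
  enorm (\sum_(i <- s) F i) <= \sum_(i <- s) enorm (F i).
Proof.
elim: s => [|x s IH]; first by rewrite !big_nil enorm0.
by rewrite !big_cons (le_trans (enormD _ _)) // lerD2l.
Qed.

Lemma enorm_step k (g : 'rV[R]_k) a : g != 0 -> 0 <= a ->
  enorm ((- (a / enorm g)) *: g) = a.
Proof.
move=> /enorm_gt0 g0 a0.
by rewrite enormZ normrN ger0_norm ?divfK ?gt_eqF // divr_ge0 // ltW.
Qed.

Lemma enorm_normalize_sub k (a b : 'rV[R]_k) : a != 0 -> b != 0 ->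
  enorm ((enorm a)^-1 *: a - (enorm b)^-1 *: b) * enorm b <= 2 * enorm (a - b).
Proof.
move=> a0 b0; have pa := enorm_gt0 a0; have pb := enorm_gt0 b0.
have -> : (enorm a)^-1 *: a - (enorm b)^-1 *: b
    = (enorm b)^-1 *: ((a - b) + (enorm b - enorm a) *: ((enorm a)^-1 *: a)).
  by apply/rowP => j; rewrite !mxE; field; rewrite !gt_eqF.
rewrite enormZ ger0_norm ?invr_ge0 ?(ltW pb) // mulrAC mulVf ?gt_eqF // mul1r.
apply: (le_trans (enormD _ _)); rewrite enormZ.
have -> : enorm ((enorm a)^-1 *: a) = 1.
  by rewrite enormZ ger0_norm ?invr_ge0 ?(ltW pa) // mulVf ?gt_eqF.
by have := lerB_enorm b a; rewrite enormB; lra.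
Qed.

Lemma enorm_step_sub k (a b : 'rV[R]_k) (t : R) : a != 0 -> b != 0 -> 0 <= t ->
  enorm ((- (t / enorm a)) *: a - (- (t / enorm b)) *: b) * enorm b
    <= t * (2 * enorm (a - b)).
Proof.
move=> a0 b0 t0.
have -> : (- (t / enorm a)) *: a - (- (t / enorm b)) *: b
    = (- t) *: ((enorm a)^-1 *: a - (enorm b)^-1 *: b).
  by rewrite scalerBr !scalerA !mulNr.
rewrite enormZ normrN ger0_norm // -mulrA.
by apply: ler_wpM2l => //; apply: enorm_normalize_sub.
Qed.
End EuclideanNorm.

Section ProductNorms.
Variable R : realType.

Lemma frob_ge0 p q (A : 'M[R]_(p, q)) : 0 <= frob A.
Proof. exact: sqrtr_ge0. Qed.

Lemma frob_tr p q (A : 'M[R]_(p, q)) : frob A^T = frob A.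
Proof.
rewrite /frob exchange_big /=; congr Num.sqrt.
by apply: eq_bigr => i _; apply: eq_bigr => j _; rewrite mxE.
Qed.

Lemma enorm_mulmx k p (v : 'rV[R]_k) (A : 'M[R]_(k, p)) :
  enorm (v *m A) <= enorm v * frob A.
Proof.
apply: sqrtr_le; first by rewrite mulr_ge0 ?enorm_ge0 ?frob_ge0.
rewrite exprMn enorm_sqr sqr_sqrtr; last first.
  by do 2 (apply: sumr_ge0 => ? _); apply: sqr_ge0.
rewrite exchange_big mulr_sumr /=; apply: ler_sum => j _.
have -> : (v *m A) 0 j = dotv v (col j A)^T.
  by rewrite mxE; apply: eq_bigr => i _; rewrite !mxE.
have -> : \sum_(i < k) A i j ^+ 2 = enorm (col j A)^T ^+ 2.
  by rewrite enorm_sqr; apply: eq_bigr => i _; rewrite !mxE expr2.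
rewrite -expr2 -(enorm_sqr v) -exprMn -real_normK ?num_real //.
by rewrite lerXn2r ?nnegrE ?mulr_ge0 ?enorm_ge0 // normr_dotv.
Qed.

Variables n m d : nat.
Implicit Types (a : 'rV[R]_n) (b : 'rV[R]_m) (c : 'rV[R]_d).

Lemma tnorm_ge_l a b c : enorm a <= tnorm a b c.
Proof. by apply: ler_wsqrtr; rewrite -addrA lerDl addr_ge0 ?dotv_ge0. Qed.

Lemma tnorm_ge_r a b c : enorm c <= tnorm a b c.
Proof. by apply: ler_wsqrtr; rewrite lerDr addr_ge0 ?dotv_ge0. Qed.

Lemma tnorm_le a b c : tnorm a b c <= enorm a + enorm b + enorm c.
Proof.
apply: sqrtr_le; first by rewrite !addr_ge0 ?enorm_ge0.
rewrite -!enorm_sqr.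
by have := enorm_ge0 a; have := enorm_ge0 b; have := enorm_ge0 c; nra.
Qed.

Lemma tnorm_0y0 b : tnorm (0 : 'rV[R]_n) b (0 : 'rV[R]_d) = enorm b.
Proof. by rewrite /tnorm !dotv0l add0r addr0. Qed.

Lemma tnorm_x00 a : tnorm a (0 : 'rV[R]_m) (0 : 'rV[R]_d) = enorm a.
Proof. by rewrite /tnorm !dotv0l !addr0. Qed.

Lemma tnorm_graph_mulmx a (B1 : 'M[R]_(n, d)) :
  tnorm a (0 : 'rV[R]_m) (a *m B1) <= (1 + frob B1) * enorm a.
Proof.
apply: (le_trans (tnorm_le _ _ _)).
by rewrite enorm0 addr0 mulrDl mul1r lerD2l mulrC enorm_mulmx.
Qed.

Lemma ge0_of_le_tnorm (K e : R) a : a != 0 -> 0 <= e ->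
  e <= K * tnorm a (0 : 'rV[R]_m) (0 : 'rV[R]_d) -> 0 <= K.
Proof.
rewrite tnorm_x00 => /enorm_gt0 a0 e0 /(le_trans e0).
by rewrite pmulr_lge0.
Qed.

Lemma lipschitz3_ge0 (K : R) (f : 'rV[R]_n -> 'rV[R]_m -> 'rV[R]_d -> R) a : a != 0 -> lipschitz3 K f -> 0 <= K.
Proof.
move=> a0 /(_ a 0 0 0 0 0); rewrite !subr0.
exact: ge0_of_le_tnorm a0 (normr_ge0 _).
Qed.

Lemma smooth3_ge0 (K : R) (f : 'rV[R]_n -> 'rV[R]_m -> 'rV[R]_d -> R) a : a != 0 -> smooth3 K f -> 0 <= K.
Proof.
move=> a0 [Gx [Gy [Gz [_ /(_ a 0 0 0 0 0)]]]]; rewrite !subr0.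
exact: ge0_of_le_tnorm a0 (sqrtr_ge0 _).
Qed.
End ProductNorms.

Section Gradient.
Variables (R : realType) (n : nat).
Implicit Types (f : 'rV[R]_n -> R) (x g : 'rV[R]_n).

Lemma has_grad_eq f f' x g : f =1 f' -> has_grad f x g -> has_grad f' x g.
Proof.
move=> ff' hg e e0; have [del del0 H] := hg e e0.
by exists del => // h /H; rewrite !ff'.
Qed.

Lemma has_gradD f1 f2 x g1 g2 : has_grad f1 x g1 -> has_grad f2 x g2 ->
  has_grad (fun z => f1 z + f2 z) x (g1 + g2).
Proof.
move=> h1 h2 e e0; have e20 : 0 < e / 2 by rewrite divr_gt0.
have [d1 d10 H1] := h1 _ e20; have [d2 d20 H2] := h2 _ e20.
exists (Num.min d1 d2) => [|h]; first by rewrite lt_min d10 d20.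
rewrite le_min => /andP[/H1 hd1 /H2 hd2].
have -> : f1 (x + h) + f2 (x + h) - (f1 x + f2 x) - dotv (g1 + g2) h =
    (f1 (x + h) - f1 x - dotv g1 h) + (f2 (x + h) - f2 x - dotv g2 h).
  by rewrite dotvDl; ring.
by apply: le_trans (ler_normD _ _) _; lra.
Qed.

Lemma has_gradN f x g : has_grad f x g -> has_grad (fun z => - f z) x (- g).
Proof.
move=> hg e e0; have [del del0 H] := hg e e0; exists del => // h /H.
by rewrite dotvNl -normrN; congr (_ <= _); congr `|_|; ring.
Qed.

Lemma has_gradZ f x g (c : R) :
  has_grad f x g -> has_grad (fun z => c * f z) x (c *: g).
Proof.
move=> hg e e0; have c1 : 0 < `|c| + 1 by rewrite ltr_pwDr.
have [del del0 H] := hg (e / (`|c| + 1)) (divr_gt0 e0 c1).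
exists del => // h /H hh.
have -> : c * f (x + h) - c * f x - dotv (c *: g) h = c * (f (x + h) - f x - dotv g h).
  by rewrite dotvZl; ring.
rewrite normrM (le_trans (ler_wpM2l (normr_ge0 c) hh)) //.
rewrite mulrA ler_wpM2r ?enorm_ge0 // mulrCA ger_pMr // ler_pdivrMr // mul1r.
by rewrite lerDl.
Qed.

Lemma has_grad_sum I (s : seq I) (F : I -> 'rV[R]_n -> R) x (G : I -> 'rV[R]_n) :
  (forall i, has_grad (F i) x (G i)) ->
  has_grad (fun z => \sum_(i <- s) F i z) x (\sum_(i <- s) G i).
Proof.
move=> hg; elim: s => [|i s IH].
  move=> e e0; exists 1 => // h _.
  by rewrite !big_nil dotv0l !subr0 normr0 mulr_ge0 ?enorm_ge0 ?ltW.
rewrite big_cons; apply: has_grad_eq (has_gradD (hg i) IH) => z.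
by rewrite big_cons.
Qed.

Lemma has_grad_min f x g : has_grad f x g -> (forall z, f x <= f z) -> g = 0.
Proof.
move=> hg fmin; apply/eqP; apply: contraT => /enorm_gt0 g0.
have [del del0 H] := hg (enorm g / 2) (divr_gt0 g0 (ltr0Sn _ 1)).
set h := (- (del / enorm g)) *: g.
have nh : enorm h = del by rewrite enorm_step ?ltW // -enorm_eq0 gt_eqF.
have gh : dotv g h = - (del * enorm g).
  by rewrite dotvZr -enorm_sqr expr2 mulNr mulrA divfK // gt_eqF.
have := H h; rewrite nh gh lexx => /(_ isT) /(le_trans (ler_norm _)).
have := fmin (x + h); have := mulr_gt0 del0 g0; lra.
Qed.

Lemma has_grad_touch f f' x g g' : has_grad f x g -> has_grad f' x g' ->
  f' x = f x -> (forall z, f' z <= f z) -> g' = g.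
Proof.
move=> hg hg' fx ff'; apply/eqP; rewrite eq_sym -subr_eq0; apply/eqP.
apply: has_grad_min (has_gradD hg (has_gradN hg')) _ => z.
by rewrite fx subrr subr_ge0.
Qed.
End Gradient.

Section ValueFunction.
Variables (R : realType) (n m : nat).
Variable L : 'rV[R]_n -> 'rV[R]_m -> R.
Variable Y : 'rV[R]_m -> Prop.
Variables (Phi : 'rV[R]_n -> R) (ystar : 'rV[R]_n -> 'rV[R]_m).
Hypothesis ystar_in : forall x, Y (ystar x).
Hypothesis ystar_max : forall x y, Y y -> L x y <= L x (ystar x).
Hypothesis PhiE : forall x, Phi x = L x (ystar x).

Lemma value_le_lipschitz (c : R) :
  (forall x x' y, `|L x y - L x' y| <= c * enorm (x - x')) ->
  forall x x', Phi x <= Phi x' + c * enorm (x - x').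
Proof.
move=> Llip x x'; have := Llip x x' (ystar x); rewrite ler_norml => /andP[_].
by have := ystar_max x' (ystar_in x); rewrite !PhiE; lra.
Qed.

Lemma value_sub_le_lipschitz_y (c : R) : 0 <= c ->
  (forall x y y', `|L x y - L x y'| <= c * enorm (y - y')) ->
  forall x y e, enorm (y - ystar x) <= e -> Phi x - c * e <= L x y.
Proof.
move=> c0 Llip x y e ye; have := Llip x y (ystar x); rewrite ler_norml => /andP[+ _].
by have := ler_wpM2l c0 ye; rewrite PhiE; lra.
Qed.

Lemma has_grad_value x g g' : has_grad Phi x g ->
  has_grad (fun x' => L x' (ystar x)) x g' -> g = g'.
Proof.
move=> hg hg'; apply/esym/(has_grad_touch hg hg'); first by rewrite PhiE.
by move=> z; rewrite PhiE ystar_max.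
Qed.
End ValueFunction.

Section Averages.
Variables (R : realType) (N : nat).
Hypothesis N_gt0 : (0 < N)%N.

Lemma normr_avg_le (F : 'I_N -> R) c : (forall i, `|F i| <= c) ->
  `|N%:R^-1 * \sum_(i < N) F i| <= c.
Proof.
move=> Fc; rewrite normrM ger0_norm ?invr_ge0 ?ler0n // ler_pdivrMl ?ltr0n //.
apply: le_trans (ler_norm_sum _ _ _) _.
apply: le_trans (ler_sum _ (fun i _ => Fc i)) _.
by rewrite sumr_const card_ord mulr_natl.
Qed.

Lemma enorm_avg_le k (F : 'I_N -> 'rV[R]_k) c : (forall i, enorm (F i) <= c) ->
  enorm (N%:R^-1 *: \sum_(i < N) F i) <= c.
Proof.
move=> Fc; rewrite enormZ ger0_norm ?invr_ge0 ?ler0n // ler_pdivrMl ?ltr0n //.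
apply: le_trans (enorm_sum _ _) _.
apply: le_trans (ler_sum _ (fun i _ => Fc i)) _.
by rewrite sumr_const card_ord mulr_natl.
Qed.
End Averages.

Section SurrogateModel.
Variables (R : realType) (n m d N : nat).
Variable l : 'rV[R]_n -> 'rV[R]_m -> 'rV[R]_d -> R.
Variables (X : 'I_N -> 'rV[R]_n) (W : 'I_N -> 'rV[R]_d).
Variables (B1 : 'M[R]_(n, d)) (B0 : 'rV[R]_d).
Hypothesis N_gt0 : (0 < N)%N.

Local Notation L := (Lk l X W B1 B0).
Local Notation z x i := (mk B1 B0 x (resid X W B1 B0 i)).

Lemma mkB x x' e : mk B1 B0 x e - mk B1 B0 x' e = (x - x') *m B1.
Proof. by rewrite /mk mulmxBl; apply/rowP => j; rewrite !mxE; ring. Qed.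

Lemma mkDx x h e : mk B1 B0 (x + h) e = mk B1 B0 x e + h *m B1.
Proof. by rewrite /mk mulmxDl; apply/rowP => j; rewrite !mxE; ring. Qed.

Lemma Lk_lipschitz_y L1 : lipschitz3 L1 l ->
  forall x y y', `|L x y - L x y'| <= L1 * enorm (y - y').
Proof.
move=> hL x y y'; rewrite /Lk -mulrBr -sumrB; apply: normr_avg_le => // i.
by have := hL x y (z x i) x y' (z x i); rewrite !subrr tnorm_0y0.
Qed.

Lemma Lk_lipschitz_x L1 B : 0 <= L1 -> frob B1 <= B -> lipschitz3 L1 l ->
  forall x x' y, `|L x y - L x' y| <= L1 * (1 + B) * enorm (x - x').
Proof.
move=> L1_ge0 B1_le hL x x' y; rewrite /Lk -mulrBr -sumrB; apply: normr_avg_le => // i.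
apply: le_trans (hL x y (z x i) x' y (z x' i)) _.
rewrite subrr mkB -mulrA ler_wpM2l // (le_trans (tnorm_graph_mulmx _ _ _)) //.
by rewrite ler_wpM2r ?enorm_ge0 ?lerD2l.
Qed.

Variables (Gx : 'rV[R]_n -> 'rV[R]_m -> 'rV[R]_d -> 'rV[R]_n)
  (Gy : 'rV[R]_n -> 'rV[R]_m -> 'rV[R]_d -> 'rV[R]_m)
  (Gz : 'rV[R]_n -> 'rV[R]_m -> 'rV[R]_d -> 'rV[R]_d).
Hypothesis l_grad : forall x y z, has_grad3 l x y z (Gx x y z) (Gy x y z) (Gz x y z).

Lemma has_grad_l_mk y e x0 :
  has_grad (fun x => l x y (mk B1 B0 x e)) x0
    (Gx x0 y (mk B1 B0 x0 e) + Gz x0 y (mk B1 B0 x0 e) *m B1^T).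
Proof.
move=> eps eps0; have c0 : 0 < 1 + frob B1 by rewrite ltr_pwDl ?frob_ge0.
have [del del0 H] := l_grad x0 y (mk B1 B0 x0 e) (divr_gt0 eps0 c0).
exists (del / (1 + frob B1)) => [|h hdel]; first by rewrite divr_gt0.
have hgraph := @tnorm_graph_mulmx R n m d h B1.
have := H h 0 (h *m B1); rewrite addr0 -mkDx dotv0r addr0 dotvDl dotv_mulmx_tr.
move=> /(_ (le_trans hgraph _)) Hh; apply: le_trans (Hh _) _.
  by rewrite mulrC -ler_pdivlMr.
apply: le_trans (ler_wpM2l _ hgraph) _; first by rewrite divr_ge0 ?ltW.
by rewrite mulrA divfK ?gt_eqF.
Qed.

Definition gradx_Lk x y := N%:R^-1 *:
  \sum_(i < N) (Gx x y (z x i) + Gz x y (z x i) *m B1^T).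

Lemma has_grad_Lk x y : has_grad (fun x' => L x' y) x (gradx_Lk x y).
Proof. by apply: has_gradZ; apply: has_grad_sum => i; apply: has_grad_l_mk. Qed.

Lemma gradx_Lk_lipschitz_y ell1 B : frob B1 <= B ->
  (forall x y z x' y' z',
     tnorm (Gx x y z - Gx x' y' z') (Gy x y z - Gy x' y' z') (Gz x y z - Gz x' y' z')
       <= ell1 * tnorm (x - x') (y - y') (z - z')) ->
  forall x y y', enorm (gradx_Lk x y - gradx_Lk x y')
                   <= ell1 * (1 + B) * enorm (y - y').
Proof.
move=> B1_le hlip x y y'; rewrite -scalerBr -sumrB; apply: enorm_avg_le => // i.
set zi := z x i; set dGx := Gx x y zi - Gx x y' zi; set dGz := Gz x y zi - Gz x y' zi.
have -> : Gx x y zi + Gz x y zi *m B1^T - (Gx x y' zi + Gz x y' zi *m B1^T)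
    = dGx + dGz *m B1^T by rewrite mulmxBl opprD addrACA.
have := hlip x y zi x y' zi; rewrite !subrr tnorm_0y0.
set T := tnorm _ _ _ => hT.
have T_ge0 : 0 <= T by apply: sqrtr_ge0.
have hx : enorm dGx <= T by apply: tnorm_ge_l.
have hz : enorm (dGz *m B1^T) <= T * B.
  rewrite (le_trans (enorm_mulmx _ _)) // frob_tr.
  by apply: ler_pM; rewrite ?enorm_ge0 ?frob_ge0 ?tnorm_ge_r.
apply: le_trans (enormD _ _) _; apply: le_trans (lerD hx hz) _.
rewrite -{1}[T]mulr1 -mulrDr mulrAC.
by rewrite ler_wpM2r // addr_ge0 // (le_trans (frob_ge0 B1)).
Qed.

Variable Y : 'rV[R]_m -> Prop.
Variables (Phi : 'rV[R]_n -> R) (ystar : 'rV[R]_n -> 'rV[R]_m).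
Hypothesis ystar_in : forall x, Y (ystar x).
Hypothesis ystar_max : forall x y, Y y -> L x y <= L x (ystar x).
Hypothesis PhiE : forall x, Phi x = L x (ystar x).

Lemma grad_Lk_sub_grad_value ell1 B : frob B1 <= B ->
  (forall x y z x' y' z',
     tnorm (Gx x y z - Gx x' y' z') (Gy x y z - Gy x' y' z') (Gz x y z - Gz x' y' z')
       <= ell1 * tnorm (x - x') (y - y') (z - z')) ->
  forall x y g g', has_grad (fun x' => L x' y) x g -> has_grad Phi x g' ->
  enorm (g - g') <= ell1 * (1 + B) * enorm (y - ystar x).
Proof.
move=> B1_le grad_lip x y g g' hg hg'.
have -> : g = gradx_Lk x y by apply: has_grad_touch (has_grad_Lk x y) hg _ _.
have -> : g' = gradx_Lk x (ystar x).
  by have := has_grad_value ystar_in ystar_max PhiE hg' (has_grad_Lk x (ystar x)).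
exact: gradx_Lk_lipschitz_y.
Qed.
End SurrogateModel.


Lemma ler_wpdivlMr (R : realFieldType) (x y z : R) :
  0 <= z -> 0 <= y -> x <= y / z -> x * z <= y.
Proof.
rewrite le_eqVlt => /predU1P[<- y0 _|z0 _]; first by rewrite mulr0.
by rewrite ler_pdivlMr.
Qed.

Lemma ler_max1_mul_min1 (R : realDomainType) (a b : R) :
  0 <= a -> a <= b -> a <= Num.max b 1 * Num.min a 1.
Proof.
move=> a0 ab; case: (leP a 1) => [a1|/ltW a1].
  by rewrite ler_peMl // le_max lexx orbT.
by rewrite mulr1 le_max ab.
Qed.

Lemma sufficient_decrease_arith (R : realFieldType)
    (G P k dl dmax hL hl eps D S A Bv Phi0 Phit : R) :
  0 < G -> 0 < P -> 0 < k -> 0 < dl -> dl <= dmax ->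
  0 <= hL -> 0 <= hl -> 0 <= eps ->
  D <= hl * eps -> G - P <= D -> S * P <= dl * (2 * D) ->
  Phi0 - hL * eps <= A -> Bv <= Phit + hL * S ->
  k * P * Num.min dl 1 <= Phi0 - Phit ->
  eps <= G / (2 * hl) ->
  eps <= P * G * k / (8 * hL * hl * Num.max dmax 1) ->
  eps <= G * Num.min dl 1 * k / (16 * hL) ->
  k / 8 * G * Num.min dl 1 <= A - Bv.
Proof.
move=> G0 P0 k0 dl0 dlm hL0 hl0 eps0 hD hGP hS hA hB hdec e1 e2 e3.
set mm := Num.min dl 1 in hdec e3 *; set M := Num.max dmax 1 in e2.
have mm0 : 0 < mm by rewrite lt_min dl0 ltr01.
have dlM : dl <= M * mm := ler_max1_mul_min1 (ltW dl0) dlm.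
have M0 : 0 <= M by rewrite le_max ler01 orbT.
have G0' := ltW G0; have P0' := ltW P0; have k0' := ltW k0.
have {}e1 : eps * (2 * hl) <= G.
  by apply: ler_wpdivlMr => //; apply: mulr_ge0.
have {}e2 : eps * (8 * hL * hl * M) <= P * G * k.
  by apply: ler_wpdivlMr => //; do ![apply: mulr_ge0 => //].
have {}e3 : eps * (16 * hL) <= G * mm * k.
  by apply: ler_wpdivlMr => //; do ?[apply: mulr_ge0 => //]; apply: ltW.
have hPG : G <= 2 * P by nra.
have hSP : hL * S * P <= mm * (P * G * k) / 4.
  have hS' : S * P <= M * mm * (2 * (hl * eps)).
    apply: le_trans hS (le_trans (ler_wpM2l (ltW dl0) _) (ler_wpM2r _ dlM)).
      by rewrite ler_pM2l.
    by rewrite mulr_ge0 ?mulr_ge0.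
  have -> : mm * (P * G * k) / 4 = hL * (M * mm * (2 * (hl * eps))) +
      mm / 4 * (P * G * k - eps * (8 * hL * hl * M)) by field.
  rewrite -mulrA ler_wpDr ?ler_wpM2l //.
  by rewrite mulr_ge0 ?subr_ge0 // divr_ge0 // ltW.
have hSG : hL * S <= mm * G * k / 4.
  by rewrite -(ler_pM2r P0) (le_trans hSP) // lter_pdivrMr //; lra.
have hLe : hL * eps <= G * mm * k / 16 by rewrite ler_pdivlMr //; lra.
have hkP : k * mm * G <= k * mm * (2 * P) by rewrite ler_pM2l ?mulr_gt0.
have : 0 <= k * G * mm by rewrite !mulr_ge0 // ltW.
lra.
Qed.

Theorem lemma2 (R : realType) (n m d : nat)
  (l : 'rV[R]_n -> 'rV[R]_m -> 'rV[R]_d -> R) (ell1 L1 mu : R)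
  (Y : 'rV[R]_m -> Prop)
  (N : nat) (X : 'I_N -> 'rV[R]_n) (W : 'I_N -> 'rV[R]_d)
  (B1 : 'M[R]_(n, d)) (B0 : 'rV[R]_d) (B : R)
  (xhat : 'rV[R]_n) (delta delta_max : R)
  (Phi : 'rV[R]_n -> R) (ystar yi : 'rV[R]_n -> 'rV[R]_m)
  (gPhi gk : 'rV[R]_n) (kappa_t eps : R) :
  smooth3 ell1 l ->
  lipschitz3 L1 l ->
  nonempty_set Y -> closed_set Y -> convex_set Y -> bounded_set Y ->
  0 < mu ->
  (forall x z, strongly_concave_on mu Y (fun y => l x y z)) ->
  (0 < N)%N ->
  least_squares_fit X W B1 B0 ->
  frob B1 <= B ->
  0 < delta -> delta <= delta_max ->
  (forall x, Y (ystar x)) ->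
  (forall x y, Y y -> Lk l X W B1 B0 x y <= Lk l X W B1 B0 x (ystar x)) ->
  (forall x, Phi x = Lk l X W B1 B0 x (ystar x)) ->
  (forall x, eball xhat delta x -> Y (yi x)) ->
  has_grad (fun x => Lk l X W B1 B0 x (yi xhat)) xhat gk ->
  has_grad Phi xhat gPhi ->
  gk != 0 -> gPhi != 0 ->
  0 < kappa_t ->
  Phi xhat - Phi (xhat + (- (delta / enorm gPhi)) *: gPhi)
    >= kappa_t * enorm gPhi * Num.min delta 1 ->
  (forall x, eball xhat delta x -> enorm (yi x - ystar x) <= eps) ->
  (let hL1 := L1 * (1 + B) in
   let hl1 := ell1 * (1 + B) ^+ 2 in
   eps <= Num.min (enorm gk / (2 * hl1))
            (Num.min (enorm gPhi * enorm gk * kappa_t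
                        / (8 * hL1 * hl1 * Num.max delta_max 1))
                     (enorm gk * Num.min delta 1 * kappa_t / (16 * hL1)))) ->
  let sk := (- (delta / enorm gk)) *: gk in
  Lk l X W B1 B0 xhat (yi xhat) - Lk l X W B1 B0 (xhat + sk) (yi (xhat + sk))
    >= kappa_t / 8 * enorm gk * Num.min delta 1.
Proof.
move=> l_smooth l_lip _ _ _ _ _ _ N_gt0 _ B1_le delta_gt0 delta_le ystar_in ystar_max
  PhiE yi_in gk_grad gPhi_grad gk0 gPhi0 kappa_gt0 Phi_decrease yi_close.
rewrite /= !le_min => /and3P[e1 e2 e3]; rewrite [is_true _]/=.
set sk := (- (delta / enorm gk)) *: gk; set st := (- (delta / enorm gPhi)) *: gPhi.
have [L1_ge0 ell1_ge0] := (lipschitz3_ge0 gk0 l_lip, smooth3_ge0 gk0 l_smooth).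
have B_ge0 : 0 <= B := le_trans (frob_ge0 B1) B1_le.
have xhat_in : eball xhat delta xhat by rewrite /eball subrr enorm0 ltW.
have sk_in : eball xhat delta (xhat + sk).
  by rewrite /eball addrC addKr enorm_step // ltW.
have eps_ge0 : 0 <= eps := le_trans (enorm_ge0 _) (yi_close _ xhat_in).
have grad_close : enorm (gk - gPhi) <= ell1 * (1 + B) ^+ 2 * eps.
  have [Gx [Gy [Gz [l_grad grad_lip]]]] := l_smooth.
  apply: le_trans (grad_Lk_sub_grad_value N_gt0 l_grad ystar_in ystar_max PhiE
                     B1_le grad_lip gk_grad gPhi_grad) _.
  have hl1_ge0 : 0 <= ell1 * (1 + B) by rewrite mulr_ge0 ?addr_ge0.
  rewrite expr2 mulrA; apply: ler_pM (yi_close _ xhat_in); rewrite ?enorm_ge0 //.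
  by rewrite ler_peMr // lerDl.
have value_close : Phi xhat - L1 * (1 + B) * eps <= Lk l X W B1 B0 xhat (yi xhat).
  apply: le_trans (value_sub_le_lipschitz_y PhiE L1_ge0
                    (Lk_lipschitz_y X W B1 B0 N_gt0 l_lip) (yi_close _ xhat_in)).
  by rewrite lerD2l lerN2 ler_wpM2r // ler_peMr // lerDl.
have value_step : Lk l X W B1 B0 (xhat + sk) (yi (xhat + sk))
    <= Phi (xhat + st) + L1 * (1 + B) * enorm (sk - st).
  apply: le_trans (ystar_max _ _ (yi_in _ sk_in)) _.
  rewrite -PhiE -[sk - st](addrKA xhat) (addrC sk).
  by have := value_le_lipschitz ystar_in ystar_max PhiE
    (Lk_lipschitz_x X W B0 N_gt0 L1_ge0 B1_le l_lip) (xhat + sk) (xhat + st).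
have hL1_ge0 : 0 <= L1 * (1 + B) by rewrite mulr_ge0 ?addr_ge0.
have hl1_ge0 : 0 <= ell1 * (1 + B) ^+ 2 by rewrite mulr_ge0 ?exprn_ge0 ?addr_ge0.
exact: (sufficient_decrease_arith (enorm_gt0 gk0) (enorm_gt0 gPhi0) kappa_gt0 delta_gt0 delta_le
          hL1_ge0 hl1_ge0 eps_ge0 grad_close (le_trans (ler_norm _) (lerB_enorm _ _))
          (enorm_step_sub gk0 gPhi0 (ltW delta_gt0)) value_close value_step
          Phi_decrease e1 e2 e3).
Qed.
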